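(* Let $\kappa\ge3$ and $\lambda\ge0$ be integers with $\lambda\le\kappa-2$, and let $\mathcal{G}=((\gamma_i,\alpha_i,\beta_i))_{i=1}^{g+1}$ be a $(\kappa,\lambda)$-graphical sequence. For $1\le i\le g$ let $\mathfrak{R}_i=\alpha_i+2\sqrt{\beta_i\gamma_i}$. Then: (i) $\mathfrak{R}_i\ge\mathfrak{R}_1$ for all $1\le i\le g$, with equality if and only if $(\gamma_i,\alpha_i,\beta_i)\in\{(1,\lambda,\kappa-\lambda-1),(\kappa-\lambda-1,\lambda,1)\}$; (ii) for any $2\le i\le g$, if $\beta_i\ge\gamma_i$ then $\mathfrak{R}_{i-1}<\mathfrak{R}_i$; (iii) for any $2\le i\le g-1$, if $\beta_i\le\gamma_i$ then $\mathfrak{R}_{i+1}<\mathfrak{R}_i$. In particular, the sequence $(\mathfrak{R}_i)_{i=1}^g$ is unimodal, i.e. there is $1\le t\le g$ with $\mathfrak{R}_1\le\dots\le\mathfrak{R}_t$ and $\mathfrak{R}_t\ge\dots\ge\mathfrak{R}_g$.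
   Context: For integers $\kappa\ge3$, $0\le\lambda\le\kappa-2$, let $V_{\kappa,\lambda}=\{(\gamma,\alpha,\beta)\in\mathbb{N}_0^3:\beta,\gamma\ge1,\ \gamma+\alpha+\beta=\kappa,\ \alpha\ge\max\{\lambda+1-\beta,\lambda+1-\gamma\}\}$. A $(\kappa,\lambda)$-graphical sequence is a sequence $\mathcal{G}=((\gamma_i,\alpha_i,\beta_i))_{i=1}^{g+1}$ of pairwise distinct elements of $\mathbb{N}_0^3$ such that: $(\gamma_i,\alpha_i,\beta_i)\in V_{\kappa,\lambda}$ for $1\le i\le g$; $(\gamma_1,\alpha_1,\beta_1)=(1,\lambda,\kappa-\lambda-1)$; $\beta_i\ge\beta_{i+1}$ for $1\le i\le g-1$ and $\gamma_i\le\gamma_{i+1}$ for $1\le i\le g$; $\beta_{g+1}=0$ and $\gamma_{g+1}+\alpha_{g+1}=\kappa$. *)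

From HB Require Import structures.
From mathcomp Require Import all_boot all_order all_algebra.
Set Implicit Arguments. Unset Strict Implicit. Unset Printing Implicit Defensive.
Import Order.TTheory GRing.Theory Num.Theory.

Definition triple := (nat * nat * nat)%type.
Definition tgamma (t : triple) : nat := t.1.1.
Definition talpha (t : triple) : nat := t.1.2.
Definition tbeta  (t : triple) : nat := t.2.
Definition mktriple (c a b : nat) : triple := (c, a, b).

(* V_{kappa,lambda}; max{l+1-b, l+1-c} <= a with truncated nat subtraction
   (equivalent to the integer version since a >= 0). *)
Definition inV (kappa lambda : nat) (t : triple) : Prop :=
  [/\ 1 <= tbeta t, 1 <= tgamma t,
      tgamma t + talpha t + tbeta t = kappa,
      lambda.+1 - tbeta t <= talpha t &
      lambda.+1 - tgamma t <= talpha t]%N.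

(* A (kappa,lambda)-graphical sequence G_1, ..., G_{g+1}, given as a
   function on indices (only the values at 1..g+1 matter). *)
Definition graphical_seq (kappa lambda g : nat) (G : nat -> triple) : Prop :=
  (forall i j, 1 <= i <= g.+1 -> 1 <= j <= g.+1 -> i <> j -> G i <> G j)%N /\
      (forall i, 1 <= i <= g -> inV kappa lambda (G i))%N /\
      G 1%N = mktriple 1 lambda (kappa - lambda - 1) /\
      (forall i, 1 <= i <= g.-1 -> tbeta (G i.+1) <= tbeta (G i))%N /\
      (forall i, 1 <= i <= g -> tgamma (G i) <= tgamma (G i.+1))%N /\
      (tbeta (G g.+1) = 0 /\ tgamma (G g.+1) + talpha (G g.+1) = kappa)%N.

Definition frakR (R : rcfType) (t : triple) : R :=
  ((talpha t)%:R + 2 * Num.sqrt ((tbeta t * tgamma t)%N)%:R)%R.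

From HB Require Import structures.
From mathcomp Require Import all_boot all_order all_algebra.
From mathcomp Require Import zify ring lra.
Set Implicit Arguments. Unset Strict Implicit. Unset Printing Implicit Defensive.
Import Order.TTheory GRing.Theory Num.Theory.
Local Open Scope ring_scope.

(* For gamma + alpha + beta = kappa one has frakR = kappa - (sqrt beta - sqrt gamma)^2,
   so frakR grows exactly when the gap between sqrt beta and sqrt gamma shrinks.  Along a
   graphical sequence beta decreases and gamma increases: while gamma <= beta the gap
   shrinks, once beta <= gamma it widens, and strictly so because consecutive triples
   are distinct and determined by (beta, gamma).  On V the gap is largest at
   (1, lambda, kappa - lambda - 1) and its mirror image, which gives (i).  Unimodality
   follows by turning around at the last index where gamma <= beta. *)

Definition defect (R : rcfType) (b c : nat) : R :=
  (Num.sqrt (b%:R : R) - Num.sqrt c%:R) ^+ 2.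

Lemma defectC (R : rcfType) b c : defect R b c = defect R c b.
Proof. by rewrite /defect; ring. Qed.

Lemma frakR_defect (R : rcfType) kappa t :
  (tgamma t + talpha t + tbeta t = kappa)%N ->
  frakR R t = kappa%:R - defect R (tbeta t) (tgamma t).
Proof.
move=> <-; rewrite /frakR /defect natrM sqrtrM ?ler0n // !natrD.
have := sqr_sqrtr (ler0n R (tbeta t)); have := sqr_sqrtr (ler0n R (tgamma t)).
set x := Num.sqrt _; set y := Num.sqrt _ => <- <-; ring.
Qed.

Lemma defect_lt (R : rcfType) b1 c1 b2 c2 :
  (c1 <= c2 <= b2)%N -> (b2 <= b1)%N -> (b1, c1) <> (b2, c2) ->
  defect R b2 c2 < defect R b1 c1.
Proof.
move=> /andP[c12 cb2] b21 neq.
have sqrt_le m n : (m <= n)%N -> Num.sqrt (m%:R : R) <= Num.sqrt n%:R.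
  by move=> mn; rewrite ler_sqrt ?ler0n // ler_nat.
have sqrt_lt m n : (m < n)%N -> Num.sqrt (m%:R : R) < Num.sqrt n%:R.
  by move=> mn; rewrite ltr_sqrt ?ltr_nat // ltr0n (leq_ltn_trans _ mn).
rewrite /defect ltrXn2r ?subr_ge0 ?sqrt_le //.
have := sqrt_le _ _ c12; have := sqrt_le _ _ b21.
have [b_lt|b_eq] : (b2 < b1)%N \/ b2 = b1 by lia.
  by have := sqrt_lt _ _ b_lt; lra.
have c_lt : (c1 < c2)%N.
  by rewrite ltn_neqAle c12 andbT; apply/eqP => c_eq; apply: neq; rewrite b_eq c_eq.
by have := sqrt_lt _ _ c_lt; lra.
Qed.

Lemma triple_eq (s t : triple) :
  (tgamma s + talpha s + tbeta s = tgamma t + talpha t + tbeta t)%N ->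
  tbeta s = tbeta t -> tgamma s = tgamma t -> s = t.
Proof.
case: s t => [[c a b]] [[c' a' b']]; rewrite /tgamma /talpha /tbeta /= => sum eb ec.
by congr (_, _, _); lia.
Qed.

Lemma frakR_mktripleC (R : rcfType) c a b :
  frakR R (mktriple c a b) = frakR R (mktriple b a c).
Proof. by rewrite /frakR /= mulnC. Qed.

Lemma frakR_extremal_lt (R : rcfType) kappa lambda t :
  (lambda < kappa)%N -> inV kappa lambda t ->
  t <> mktriple 1 lambda (kappa - lambda - 1) ->
  t <> mktriple (kappa - lambda - 1) lambda 1 ->
  frakR R (mktriple 1 lambda (kappa - lambda - 1)) < frakR R t.
Proof.
move=> l_lt [b_ge1 c_ge1 sum a_b a_c] t_ne1 t_ne2.
rewrite (frakR_defect R sum) (@frakR_defect R kappa) /=; last first.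
  by rewrite /tgamma /talpha /tbeta /=; lia.
change (tgamma (mktriple 1 _ _)) with 1%N; rewrite ltrD2l ltrN2.
case: (leqP (tgamma t) (tbeta t)) => [c_le_b|b_lt_c].
  apply: defect_lt; [lia | lia | case=> eb ec].
  by apply: t_ne1; apply: triple_eq; rewrite /tgamma /talpha /tbeta /= in sum eb ec *; lia.
rewrite defectC; apply: defect_lt; [lia | lia | case=> eb ec].
by apply: t_ne2; apply: triple_eq; rewrite /tgamma /talpha /tbeta /= in sum eb ec *; lia.
Qed.

Lemma unimodal_of_switch d (T : orderType d) (f : nat -> T) (p : pred nat) n :
  (1 <= n)%N -> p 1%N ->
  (forall i j, (1 <= i <= j)%N -> (j <= n)%N -> p j -> p i) ->
  (forall i, (1 <= i < n)%N -> p i.+1 -> (f i <= f i.+1)%O) ->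
  (forall i, (1 <= i < n)%N -> ~~ p i -> (f i.+1 <= f i)%O) ->
  exists2 t, (1 <= t <= n)%N &
    (forall i, (1 <= i < t)%N -> (f i <= f i.+1)%O) /\
    (forall i, (t <= i < n)%N -> (f i.+1 <= f i)%O).
Proof.
move=> n_ge1 p1 p_closed f_up f_down.
have ex_p : exists i, (1 <= i <= n)%N && p i by exists 1%N; rewrite p1 n_ge1.
have p_le_n i : (1 <= i <= n)%N && p i -> (i <= n)%N by case/andP=> /andP[].
case: (ex_maxnP ex_p p_le_n) => s /andP[s_in ps] s_max.
have up i : (1 <= i < s)%N -> (f i <= f i.+1)%O.
  by move=> i_in; apply: f_up; [lia | apply: (p_closed _ s) => //; lia].
have down i : (s < i < n)%N -> (f i.+1 <= f i)%O.
  move=> i_in; apply: f_down; first lia.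
  by apply/negP => pi; have := s_max i; rewrite pi andbT; lia.
have [s_lt_n|s_eq_n] : (s < n)%N \/ s = n by lia.
  case: (leP (f s.+1) (f s)) => [f_down_s|f_up_s].
    exists s => //; split => // i i_in.
    by case: (ltngtP s i) => [s_lt_i|i_lt_s|<-] //; [apply: down; lia | lia].
  exists s.+1; first lia; split => i i_in; last by apply: down; lia.
  by case: (ltngtP i s) => [i_lt_s|s_lt_i|->]; [apply: up; lia | lia | exact: ltW].
by exists s => //; split => // i; lia.
Qed.

Section GraphicalSequence.
Variables (R : rcfType) (kappa lambda g : nat) (G : nat -> triple).
Hypothesis G_graphical : graphical_seq kappa lambda g G.

Local Notation RR i := (frakR R (G i)).

Let G_inV i : (1 <= i <= g)%N -> inV kappa lambda (G i).
Proof. by case: G_graphical => _ [G_inV _]; apply: G_inV. Qed.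

Let G1 : G 1%N = mktriple 1 lambda (kappa - lambda - 1).
Proof. by case: G_graphical => _ [_ [G1 _]]. Qed.

Let beta_succ_le i : (1 <= i < g)%N -> (tbeta (G i.+1) <= tbeta (G i))%N.
Proof. by case: G_graphical => _ [_ [_ [beta_dec _]]] i_in; apply: beta_dec; lia. Qed.

Let gamma_le_succ i : (1 <= i < g)%N -> (tgamma (G i) <= tgamma (G i.+1))%N.
Proof. by case: G_graphical => _ [_ [_ [_ [gamma_inc _]]]] i_in; apply: gamma_inc; lia. Qed.

Lemma graphical_seq_length_gt0 : (lambda.+2 <= kappa)%N -> (0 < g)%N.
Proof.
move=> lambda_le_kappa.
case: G_graphical => _ [_ [_ [_ [_ [beta_last _]]]]].
by rewrite lt0n; apply/eqP => g0; move: beta_last; rewrite g0 G1 /tbeta /=; lia.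
Qed.

Lemma frakR_G i :
  (1 <= i <= g)%N -> RR i = kappa%:R - defect R (tbeta (G i)) (tgamma (G i)).
Proof. by move=> /G_inV[_ _ sum _ _]; apply: frakR_defect. Qed.

Lemma beta_gamma_succ_neq i : (1 <= i < g)%N ->
  tbeta (G i) = tbeta (G i.+1) -> tgamma (G i) = tgamma (G i.+1) -> False.
Proof.
move=> i_in eb ec; case: G_graphical => G_inj _; apply: (G_inj i i.+1); try lia.
have [[_ _ sum _ _] [_ _ sum' _ _]] : inV kappa lambda (G i) /\ inV kappa lambda (G i.+1).
  by split; apply: G_inV; lia.
by apply: triple_eq; rewrite // sum sum'.
Qed.

Lemma frakR_lt_succ i : (1 <= i < g)%N ->
  (tgamma (G i.+1) <= tbeta (G i.+1))%N -> RR i < RR i.+1.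
Proof.
move=> i_in c_le_b; rewrite !frakR_G ?ltrD2l ?ltrN2; try lia.
apply: defect_lt; first by rewrite c_le_b gamma_le_succ.
  exact: beta_succ_le.
by case; apply: beta_gamma_succ_neq.
Qed.

Lemma frakR_succ_lt i : (1 <= i < g)%N ->
  (tbeta (G i) <= tgamma (G i))%N -> RR i.+1 < RR i.
Proof.
move=> i_in b_le_c; rewrite !frakR_G ?ltrD2l ?ltrN2; try lia.
rewrite defectC (defectC _ (tbeta (G i.+1))).
apply: defect_lt; first by rewrite b_le_c andbT beta_succ_le.
  exact: gamma_le_succ.
by case=> ec eb; apply: (beta_gamma_succ_neq i_in).
Qed.

Lemma gamma_le_beta_antitone i j : (1 <= i <= j)%N -> (j <= g)%N ->
  (tgamma (G j) <= tbeta (G j))%N -> (tgamma (G i) <= tbeta (G i))%N.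
Proof.
move=> /andP[i_ge1 i_le_j] j_le_g c_le_b.
pose D := [pred k | 1 <= k <= g]%N.
have D_convex : {in D &, forall i j k, (i < k < j)%N -> k \in D}.
  by move=> a b /[!inE] a_in b_in k k_in; rewrite inE; lia.
have gamma_mono : {in D &, {homo tgamma \o G : i j / i <= j}}%N.
  apply: homo_leq_in leqnn leq_trans D_convex _ => k /[!inE] k_in k1_in.
  by apply: gamma_le_succ; lia.
have beta_anti : {in D &, {homo tbeta \o G : i j / i <= j >-> j <= i}}%N.
  apply: homo_leq_in leqnn (fun _ _ _ xy yz => leq_trans yz xy) D_convex _.
  by move=> k /[!inE] k_in k1_in; apply: beta_succ_le; lia.
have [i_in j_in] : i \in D /\ j \in D by rewrite !inE; lia.
exact: leq_trans (gamma_mono i j i_in j_in i_le_j)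
  (leq_trans c_le_b (beta_anti i j i_in j_in i_le_j)).
Qed.

Lemma frakR_G1_minimum i : (lambda < kappa)%N -> (1 <= i <= g)%N ->
  RR 1%N <= RR i /\
  (RR i = RR 1%N <->
     G i = mktriple 1 lambda (kappa - lambda - 1) \/
     G i = mktriple (kappa - lambda - 1) lambda 1).
Proof.
move=> lambda_lt i_in; rewrite G1.
case: (boolP ((G i == mktriple 1 lambda (kappa - lambda - 1)) ||
              (G i == mktriple (kappa - lambda - 1) lambda 1)))
  => [|/norP[/eqP ne1 /eqP ne2]].
  case/orP => /eqP ->; rewrite ?[frakR R (mktriple (kappa - _ - _) _ _)]frakR_mktripleC.
    by split; [exact: lexx | split => // _; left].
  by split; [exact: lexx | split => // _; right].
have lt1 : frakR R (mktriple 1 lambda (kappa - lambda - 1)) < RR i.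
  by apply: frakR_extremal_lt => //; exact: G_inV.
split; first exact: ltW.
by split=> [eq1 | []//]; rewrite eq1 ltxx in lt1.
Qed.

End GraphicalSequence.

Theorem lemma3p3 (R : rcfType) (kappa lambda g : nat) (G : nat -> triple) :
  (3 <= kappa)%N -> (lambda <= kappa - 2)%N ->
  graphical_seq kappa lambda g G ->
  let RR := fun i : nat => frakR R (G i) in
  [/\ (forall i, (1 <= i <= g)%N ->
         RR 1%N <= RR i /\
         (RR i = RR 1%N <->
            G i = mktriple 1 lambda (kappa - lambda - 1) \/
            G i = mktriple (kappa - lambda - 1) lambda 1)),
      (forall i, (2 <= i <= g)%N -> (tgamma (G i) <= tbeta (G i))%N ->
         RR i.-1 < RR i),
      (forall i, (2 <= i <= g.-1)%N -> (tbeta (G i) <= tgamma (G i))%N ->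
         RR i.+1 < RR i) &
      exists2 t, (1 <= t <= g)%N &
        (forall i, (1 <= i < t)%N -> RR i <= RR i.+1) /\
        (forall i, (t <= i < g)%N -> RR i.+1 <= RR i)].
Proof.
move=> kappa_ge3 lambda_le graphical RR; subst RR.
have lambda_lt : (lambda.+2 <= kappa)%N by lia.
split.
- by move=> i; apply: (frakR_G1_minimum R graphical); lia.
- move=> i i_in c_le_b; have := frakR_lt_succ R graphical (i := i.-1).
  by rewrite prednK; [apply => //; lia | lia].
- by move=> i i_in b_le_c; apply: (frakR_succ_lt R graphical); lia.
apply: (unimodal_of_switch (p := fun i => tgamma (G i) <= tbeta (G i))%N).
- exact: graphical_seq_length_gt0 graphical lambda_lt.
- by case: graphical => _ [_ [-> _]]; rewrite /tgamma /tbeta /=; lia.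
- exact: gamma_le_beta_antitone graphical.
- by move=> i i_in c_le_b; apply/ltW/(frakR_lt_succ R graphical).
- move=> i i_in; rewrite -ltnNge => b_lt_c.
  by apply/ltW/(frakR_succ_lt R graphical) => //; apply: ltnW.
Qed.
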